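(* Let $k\ge1$ and $n\ge1$, and let $a_1,\dots,a_n\in A$ be such that for each $i$ there is an integer $p_i>0$ with $a_i\in A(100^{k^2}p_i-1)$. Suppose $a_i\notin B_1+\dots+B_k$ for every $i$. Then for all non-negative integers $m_1,\dots,m_n$, $$a_1x_{m_1}a_2x_{m_2}\cdots a_nx_{m_n}\notin B_1+\dots+B_k.$$
   Context: Let $K$ be a field and $A$ the free associative (non-unital) $K$-algebra on free generators $x_0,x_1,x_2,\dots$, with $K$-basis of monomials; $A^1$ is $A$ with unity adjoined. For $n\ge1$, $A(n)$ is the $K$-span of monomials of length $n$, and $A(0)=K$. For a monomial $s=x_{i_1}\cdots x_{i_n}$ write $s[q]=x_{i_q}$. For $j\ge1$, $Z_j$ is the set of all elements $a\in A$ of one of the forms: (1) $a=\kappa s$, $\kappa\in K$, $s$ a monomial of length $100^{j^2}-1$ with $s[3^p\cdot100^{(j-1)^2}]=s[3^q\cdot100^{(j-1)^2}]$ for some $0\le p<q\le j$; (2) $a=\kappa(s_1+s_2)$, $\kappa\in K$, $s_1,s_2$ monomials of length $100^{j^2}-1$, with integers $0\le p<q\le j$ and $l_1>l_2\ge0$ such that $s_1$ has $x_{l_1}$ at position $3^p\cdot100^{(j-1)^2}$ and $x_{l_2}$ at position $3^q\cdot100^{(j-1)^2}$, $s_2$ has $x_{l_2}$ and $x_{l_1}$ at these positions respectively, and $s_1,s_2$ agree at all other positions. $B_j=\sum_{m\ge0}A(m\cdot100^{j^2})\,Z_j\,A^1$ (the $K$-span of products $uzv$ with $u\in A(m\cdot100^{j^2})$,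 $m\ge0$, $z\in Z_j$, $v\in A^1$). *)

(* The free associative algebra K<x_0,x_1,...> with unity
   adjoined (A^1) is modelled by finitely supported coefficient functions
   on words (seq nat, the word [:: i1; ...; in] being x_{i1}...x_{in});
   the empty word is the unit. *)
From HB Require Import structures.
From mathcomp Require Import all_boot all_order all_algebra.
Set Implicit Arguments. Unset Strict Implicit. Unset Printing Implicit Defensive.
Import GRing.Theory.
Local Open Scope ring_scope.

Section FreeAlg.
Variable K : fieldType.

Definition elt := seq nat -> K.

Definition finsupp (f : elt) : Prop :=
  exists L : seq (seq nat), forall w, f w != 0 -> w \in L.

Definition A1 (f : elt) : Prop := finsupp f.
Definition inA (f : elt) : Prop := finsupp f /\ f [::] = 0.

Definition An (n : nat) (f : elt) : Prop :=
  finsupp f /\ forall w, f w != 0 -> size w = n.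

Definition zeroA : elt := fun _ => 0.
Definition addA (f g : elt) : elt := fun w => f w + g w.
Definition scaleA (c : K) (f : elt) : elt := fun w => c * f w.
Definition mulA (f g : elt) : elt :=
  fun w => \sum_(i < (size w).+1) f (take i w) * g (drop i w).
Definition mono (s : seq nat) : elt := fun w => (w == s)%:R.
Definition oneA : elt := mono [::].
Definition gen (i : nat) : elt := mono [:: i].

Inductive span (S : elt -> Prop) : elt -> Prop :=
| span0 : span S zeroA
| span_gen f : S f -> span S f
| span_add f g : span S f -> span S g -> span S (addA f g)
| span_scale c f : span S f -> span S (scaleA c f).

(* s[q], 1-indexed *)
Definition pos (s : seq nat) (q : nat) : nat := nth 0%N s q.-1.

Definition Nj (j : nat) : nat := (100 ^ (j ^ 2)).-1.
Definition Pj (j p : nat) : nat := (3 ^ p * 100 ^ ((j.-1) ^ 2))%N.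

Definition Zj (j : nat) (a : elt) : Prop :=
  (exists (c : K) (s : seq nat),
     a = scaleA c (mono s) /\ size s = Nj j /\
     exists p q, (p < q <= j)%N /\ pos s (Pj j p) = pos s (Pj j q))
  \/
  (exists (c : K) (s1 s2 : seq nat),
     a = scaleA c (addA (mono s1) (mono s2)) /\
     size s1 = Nj j /\ size s2 = Nj j /\
     exists p q l1 l2, (p < q <= j)%N /\ (l2 < l1)%N /\
       pos s1 (Pj j p) = l1 /\ pos s1 (Pj j q) = l2 /\
       pos s2 (Pj j p) = l2 /\ pos s2 (Pj j q) = l1 /\
       forall r, (1 <= r <= Nj j)%N -> r <> Pj j p -> r <> Pj j q ->
         pos s1 r = pos s2 r).

Definition Bgen (j : nat) (b : elt) : Prop :=
  exists m u z v, An (m * 100 ^ (j ^ 2)) u /\ Zj j z /\ A1 v /\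
    b = mulA (mulA u z) v.

Definition Bj (j : nat) : elt -> Prop := span (Bgen j).

Definition Bsum (k : nat) (x : elt) : Prop :=
  exists b : nat -> elt, (forall j, (1 <= j <= k)%N -> Bj j (b j)) /\
    x = \big[addA/zeroA]_(1 <= j < k.+1) b j.

Definition wordprod (n : nat) (a : 'I_n -> elt) (m : 'I_n -> nat) : elt :=
  foldr (fun i acc => mulA (mulA (a i) (gen (m i))) acc) oneA (enum 'I_n).

End FreeAlg.

From Pilot Require Import Defs.
From HB Require Import structures.
From mathcomp Require Import all_boot all_order all_algebra.
From mathcomp Require Import fingroup perm zify ring.
From Stdlib Require Import FunctionalExtensionality Classical.
Set Implicit Arguments. Unset Strict Implicit. Unset Printing Implicit Defensive.
Import GRing.Theory.

(* Fix k and a length l with 100^{k^2} | l + 1; each a_i has such a length.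
   Label the positions of words of length l so that two distinct positions
   get the same label exactly when they are the two special positions
   3^p 100^{(j-1)^2} < 3^q 100^{(j-1)^2} of one 100^{j^2}-block, j <= k.
   The Z_j relations then say that modulo B a word with equal letters at two
   such positions vanishes and that swapping those letters changes its sign;
   hence w.σ = sgn(σ) w mod B for the group H of label-preserving
   permutations.  It follows that the functionals
     phi_s(x) = sum_{σ in H} sgn(σ) x(s.σ)
   detect B on A(l): if they all vanish on x in A(l), then x is in B.
   Dually, for s of length l and a letter mu, the operator
     Lambda_{s,mu}(y)(v) = sum_{σ in H} sgn(σ) y(s.σ mu v)
   maps B into B, because each generator u z v of B_j has its Z_j-window
   either inside the first l letters (then it is killed by antisymmetry) or
   after the first l + 1 letters (then Lambda acts on u alone).  Since
   Lambda_{s,mu}(a x_mu Q) = phi_s(a) Q, an a in A(l) \ B can be cancelled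
   on the left, and induction on n ends at 1, which is not in B. *)

(* A word of length 100^{j^2}-1 occupies
   a block of length 100^{j^2} together with the following letter; inside it
   the Z_j relations involve the positions 3^p 100^{(j-1)^2}, p <= j, which we
   count from 0 as [spot j p]. *)
Definition blk (j : nat) : nat := 100 ^ (j ^ 2).
Definition spot (j p : nat) : nat := (Pj j p).-1.

Lemma blk_gt0 j : 0 < blk j.
Proof. by rewrite /blk expn_gt0. Qed.

Lemma Pj_gt0 j p : 0 < Pj j p.
Proof. by rewrite /Pj muln_gt0 !expn_gt0. Qed.

(* 3^p 100^{(j-1)^2} < 100^{j^2} because 3^p < 100^j and (j-1)^2 + j <= j^2. *)
Lemma Pj_lt_blk j p : 0 < j -> p <= j -> Pj j p < blk j.
Proof.
move=> j_gt0 le_pj; rewrite /Pj /blk.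
have lt_3p : 3 ^ p < 100 ^ j.
  by apply: leq_ltn_trans (leq_pexp2l _ le_pj) _; rewrite // ltn_exp2r.
have le_exp : (j.-1) ^ 2 + j <= j ^ 2.
  by case: j j_gt0 {lt_3p le_pj} => // j _ /=; rewrite !expnS !expn0 !muln1; nia.
apply: leq_trans (_ : 100 ^ j * 100 ^ j.-1 ^ 2 <= _).
  by rewrite ltn_pmul2r ?expn_gt0.
by rewrite -expnD addnC leq_exp2l.
Qed.

Lemma Pj_inj j p q : Pj j p = Pj j q -> p = q.
Proof. by rewrite /Pj => /eqP; rewrite eqn_pmul2r ?expn_gt0 // eqn_exp2l // => /eqP. Qed.

Lemma spot_lt j p : 0 < j -> p <= j -> spot j p < Nj j.
Proof.
move=> j_gt0 le_pj; rewrite /spot /Nj -/(blk j).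
by have := Pj_lt_blk j_gt0 le_pj; have := Pj_gt0 j p; case: (Pj j p); case: (blk j).
Qed.

Lemma spot_inj j p q : spot j p = spot j q -> p = q.
Proof.
move=> E; apply: (@Pj_inj j).
by rewrite -(prednK (Pj_gt0 j p)) -(prednK (Pj_gt0 j q)); congr _.+1.
Qed.

Lemma Nj_gt0 j : 0 < j -> 0 < Nj j.
Proof.
by move=> j_gt0; rewrite /Nj -subn1 subn_gt0 -[X in X < _](expn0 100) ltn_exp2l // expn_gt0 j_gt0.
Qed.

Lemma blk_dvd j j' : j <= j' -> blk j %| blk j'.
Proof. by move=> le_jj'; apply: dvdn_exp2l; rewrite leq_exp2r. Qed.

(* Distinct positions with equal
   labels are exactly the pairs on which some Z_j relation acts. *)
Definition special (j r : nat) : bool := [exists p : 'I_j.+1, r %% blk j == Pj j p].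

Definition label (k i : nat) : nat * nat :=
  if [pick j : 'I_k | special j.+1 i.+1] is Some j then (j.+1, i.+1 %/ blk j.+1)
  else (0, i.+1).

(* A position is special for at most one j: for j' < j, 100^{j'^2} divides
   every Pj j p, and a special residue for j' is never 0. *)
Lemma special_uniq j j' r : 0 < j -> 0 < j' -> special j r -> special j' r -> j = j'.
Proof.
wlog lt_j'j : j j' / j' < j.
  move=> wlog_lt j_gt0 j'_gt0 sj sj'; case: (ltngtP j' j) => // lt.
  - exact: wlog_lt.
  - exact/esym/wlog_lt.
move=> j_gt0 j'_gt0 /existsP [p /eqP rp] /existsP [q /eqP rq].
have dvd_base : blk j' %| 100 ^ (j.-1 ^ 2) by apply: dvdn_exp2l; rewrite leq_exp2r; lia.
have : r %% blk j' = 0.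
  rewrite -(modn_dvdm _ (blk_dvd (ltnW lt_j'j))) rp /Pj.
  exact/eqP/dvdn_mull.
by rewrite rq => Pj0; move: (Pj_gt0 j' q); rewrite Pj0.
Qed.

Lemma label_spot k j m p : 1 <= j <= k -> p <= j ->
  label k (m * blk j + spot j p) = (j, m).
Proof.
move=> /andP [j_gt0 le_jk] le_pj.
have Pj_pos := Pj_gt0 j p.
have succE : (m * blk j + spot j p).+1 = m * blk j + Pj j p by rewrite -addnS prednK.
have sp : special j (m * blk j + Pj j p).
  apply/existsP; exists (Ordinal (leq_ltn_trans le_pj (ltnSn j))).
  by rewrite /= modnMDl modn_small // Pj_lt_blk.
rewrite /label succE; case: pickP => [j0 sj0 | none].
- rewrite -(special_uniq j_gt0 _ sp sj0) // divnMDl ?blk_gt0 //.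
  by rewrite divn_small ?addn0 // Pj_lt_blk.
- have lt_jk : j.-1 < k by rewrite prednK.
  by move: (none (Ordinal lt_jk)); rewrite /= prednK // sp.
Qed.

Lemma label_eq k a b : label k a = label k b -> a != b ->
  exists j m p q, [/\ 1 <= j <= k, (p <= j) && (q <= j), p != q,
    a = m * blk j + spot j p & b = m * blk j + spot j q].
Proof.
rewrite /label; case: pickP => [j0 sa | na]; case: pickP => [j1 sb | nb] //; last first.
  by case=> ->; rewrite eqxx.
case=> /val_inj E1 E2 neq_ab; subst j1.
move: sa sb => /existsP [p /eqP ra] /existsP [q /eqP rb].
exists j0.+1, (a.+1 %/ blk j0.+1), p, q; split.
- by rewrite ltn_ord.
- by apply/andP; split; rewrite -ltnS ltn_ord.
- apply: contra neq_ab => /eqP /val_inj pq; subst q; apply/eqP/succn_inj.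
  by rewrite (divn_eq a.+1 (blk j0.+1)) (divn_eq b.+1 (blk j0.+1)) ra rb E2.
- apply: succn_inj; rewrite -addnS /spot prednK ?Pj_gt0 // -ra.
  exact: divn_eq.
- apply: succn_inj; rewrite -addnS /spot prednK ?Pj_gt0 // -rb E2.
  exact: divn_eq.
Qed.

Lemma block_fits B l m : 0 < B -> B %| l.+1 -> m * B <= l -> m * B + B.-1 <= l.
Proof.
move=> B_gt0 /dvdnP [c lE] le_ml.
have lt_mc : m < c by rewrite -(ltn_pmul2r B_gt0) -lE ltnS.
have : m.+1 * B <= c * B by rewrite leq_pmul2r.
by rewrite -lE mulSn; lia.
Qed.

Lemma block_dichotomy B l m : 0 < B -> B %| l.+1 ->
  m * B + B.-1 <= l \/ exists m', m * B = l.+1 + m' * B.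
Proof.
move=> B_gt0 dvd_Bl; case: (leqP (m * B) l) => le_ml; first by left; apply: block_fits.
right; have /dvdnP [c lE] := dvd_Bl.
have le_cm : c <= m by rewrite -(leq_pmul2r B_gt0) -lE.
by exists (m - c); rewrite lE -mulnDl subnKC.
Qed.

Definition permute L (w : seq nat) (s : 'S_L) : seq nat :=
  [seq nth 0 w (s i) | i <- enum 'I_L].

Lemma size_permute L w (s : 'S_L) : size (permute w s) = L.
Proof. by rewrite size_map size_enum_ord. Qed.

Lemma nth_permute L w (s : 'S_L) (i : 'I_L) : nth 0 (permute w s) i = nth 0 w (s i).
Proof. by rewrite /permute (nth_map i) ?size_enum_ord // nth_ord_enum. Qed.

Lemma permuteM L w (s t : 'S_L) : permute (permute w s) t = permute w (t * s)%g.
Proof.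
apply: (eq_from_nth (x0 := 0)); rewrite !size_permute // => i lt_iL.
by rewrite -[i]/(nat_of_ord (Ordinal lt_iL)) !nth_permute permM.
Qed.

Lemma permute1 L w : size w = L -> permute w (1%g : 'S_L) = w.
Proof.
move=> sz_w; apply: (eq_from_nth (x0 := 0)); rewrite size_permute // => i lt_iL.
by rewrite -[i]/(nat_of_ord (Ordinal lt_iL)) nth_permute perm1.
Qed.

Lemma nth_permute_tperm L w (a b : 'I_L) i : i < L ->
  nth 0 (permute w (tperm a b)) i =
  nth 0 w (if i == val a then val b else if i == val b then val a else i).
Proof.
move=> lt_iL; rewrite -[i]/(nat_of_ord (Ordinal lt_iL)) nth_permute.
case: tpermP => [->|->|/eqP na /eqP nb]; rewrite ?eqxx //.
- by case: eqP => [<-|].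
- by rewrite !val_eqE (negbTE na) (negbTE nb).
Qed.

Lemma permute_tpermK L w (a b : 'I_L) : size w = L ->
  permute (permute w (tperm a b)) (tperm a b) = w.
Proof. by move=> sz_w; rewrite permuteM tperm2 permute1. Qed.

Lemma permute_tperm_id L w (a b : 'I_L) : size w = L ->
  nth 0 w a = nth 0 w b -> permute w (tperm a b) = w.
Proof.
move=> sz_w wab; apply: (eq_from_nth (x0 := 0)); rewrite size_permute // => i lt_iL.
rewrite nth_permute_tperm //; case: eqP => [->|_]; first by rewrite wab.
by case: eqP => [->|].
Qed.

Lemma permute_tperm_window L N d w (a b : 'I_L) (a0 b0 : 'I_N) :
  d + N <= L -> size w = L -> val a = d + a0 -> val b = d + b0 ->
  [/\ take d (permute w (tperm a b)) = take d w,
      drop (d + N) (permute w (tperm a b)) = drop (d + N) w &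
      take N (drop d (permute w (tperm a b))) = permute (take N (drop d w)) (tperm a0 b0)].
Proof.
move=> le_dNL sz_w aE bE.
have lt_a0 := ltn_ord a0; have lt_b0 := ltn_ord b0.
split; apply: (eq_from_nth (x0 := 0)).
- by rewrite !size_takel ?size_permute ?sz_w //; lia.
- rewrite size_takel ?size_permute; last lia.
  move=> i lt_id; rewrite !nth_take // nth_permute_tperm ?aE ?bE; last lia.
  by rewrite !ifN_eq //; lia.
- by rewrite !size_drop size_permute sz_w.
- rewrite size_drop size_permute => i lt_i.
  rewrite !nth_drop nth_permute_tperm ?aE ?bE; last lia.
  by rewrite !ifN_eq //; lia.
- by rewrite size_permute size_takel // size_drop size_permute; lia.
- rewrite size_takel ?size_drop ?size_permute; last lia.
  move=> i lt_iN; rewrite nth_take // nth_drop nth_permute_tperm ?aE ?bE; last lia.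
  rewrite nth_permute_tperm // !eqn_add2l.
  by case: (i == a0); case: (i == b0); rewrite /= nth_take ?ltn_ord // nth_drop.
Qed.

Lemma cat_window (w : seq nat) d N : w = take d w ++ take N (drop d w) ++ drop (d + N) w.
Proof. by rewrite addnC -drop_drop !cat_take_drop. Qed.

Lemma take_cat_prefix (T : Type) (X Y : seq T) n : take (size X + n) (X ++ Y) = X ++ take n Y.
Proof. by rewrite takeD take_size_cat // drop_size_cat. Qed.

Lemma drop_cat_prefix (T : Type) (X Y : seq T) n : drop (size X + n) (X ++ Y) = drop n Y.
Proof. by rewrite addnC -drop_drop drop_size_cat. Qed.

Lemma eq_cat3 (u s r w : seq nat) :
  (w == u ++ s ++ r) = [&& take (size u) w == u, take (size s) (drop (size u) w) == s
                          & drop (size u + size s) w == r].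
Proof.
apply/eqP/and3P => [-> | [/eqP wu /eqP ws /eqP wr]].
- by rewrite take_size_cat // drop_size_cat // take_size_cat // drop_cat_prefix drop_size_cat.
- rewrite -(cat_take_drop (size u) w) wu -(cat_take_drop (size s) (drop _ w)) ws.
  by rewrite drop_drop addnC wr.
Qed.

Section LabelGroup.
Variable k : nat.

Definition preserves_labels L (s : 'S_L) : bool := [forall i, label k (s i) == label k i].

Lemma preserves_labelsP L (s : 'S_L) :
  reflect (forall i, label k (s i) = label k i) (preserves_labels s).
Proof. by apply: (iffP forallP) => H i; apply/eqP. Qed.

Lemma preserves_labels1 L : preserves_labels (1%g : 'S_L).
Proof. by apply/preserves_labelsP => i; rewrite perm1. Qed.

Lemma preserves_labelsM L (s t : 'S_L) :
  preserves_labels s -> preserves_labels t -> preserves_labels (s * t)%g.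
Proof.
move=> /preserves_labelsP Hs /preserves_labelsP Ht.
by apply/preserves_labelsP => i; rewrite permM Ht Hs.
Qed.

Lemma preserves_labelsV L (s : 'S_L) : preserves_labels s -> preserves_labels (s^-1)%g.
Proof.
by move=> /preserves_labelsP Hs; apply/preserves_labelsP => i; rewrite -{2}(permKV s i) Hs.
Qed.

Lemma preserves_labels_tperm L (a b : 'I_L) :
  label k a = label k b -> preserves_labels (tperm a b).
Proof. by move=> lab_ab; apply/preserves_labelsP => i; case: tpermP => [->|->|]. Qed.

End LabelGroup.

(* In the imported algebra library mulA, addA and span name other objects;
   these notations refer to the operations of the free algebra. *)
Notation mulA := (@Defs.mulA _).
Notation addA := (@Defs.addA _).
Notation span := (@Defs.span _).

Local Open Scope ring_scope.

Definition sgn (R : pzRingType) L (s : 'S_L) : R := (-1) ^+ odd_perm s.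

Lemma sgnM (R : pzRingType) L (s t : 'S_L) : sgn R (s * t)%g = sgn R s * sgn R t.
Proof. by rewrite /sgn odd_permM signr_addb. Qed.

Lemma sgn_tperm (R : pzRingType) L (a b : 'I_L) : a != b -> sgn R (tperm a b) = -1.
Proof. by move=> neq_ab; rewrite /sgn odd_tperm neq_ab expr1. Qed.

Section FreeAlgebra.
Variable K : fieldType.

Lemma elt_ext (f g : elt K) : (forall w, f w = g w) -> f = g.
Proof. exact: functional_extensionality. Qed.

Lemma mulA_homl d (f h : elt K) w : An d f ->
  mulA f h w = if (d <= size w)%N then f (take d w) * h (drop d w) else 0.
Proof.
move=> [_ f_hom]; rewrite /Defs.mulA.
have f0 i : (i <= size w)%N -> i != d -> f (take i w) = 0.
  move=> le_iw neq_id; apply/eqP; apply: contraNT neq_id => /f_hom.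
  by rewrite size_takel // => ->.
case: leqP => le_dw.
- have lt_dw : (d < (size w).+1)%N by rewrite ltnS.
  rewrite (bigD1 (Ordinal lt_dw)) //= big1 ?addr0 // => i neq_i.
  by rewrite f0 ?mul0r // -ltnS.
- have le_iw (i : 'I_(size w).+1) : (i <= size w)%N by rewrite -ltnS.
  rewrite big1 // => i _; rewrite f0 ?mul0r //.
  by rewrite neq_ltn (leq_ltn_trans (le_iw i) le_dw).
Qed.

Lemma addAC (f g : elt K) : addA f g = addA g f.
Proof. by apply: elt_ext => w; rewrite /Defs.addA addrC. Qed.

Lemma An_mulA d e (f h : elt K) : An d f -> An e h -> An (d + e) (mulA f h).
Proof.
move=> f_hom h_hom; have [[Lf f_supp] f_deg] := f_hom; have [[Lh h_supp] h_deg] := h_hom.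
have split_w w : mulA f h w != 0 -> f (take d w) != 0 /\ h (drop d w) != 0.
  by rewrite (mulA_homl _ _ f_hom); case: ifP; rewrite ?eqxx // mulf_eq0 negb_or => _ /andP.
split.
- exists [seq x ++ y | x <- Lf, y <- Lh] => w /split_w [fw hw].
  by rewrite -(cat_take_drop d w); apply: allpairs_f; [exact: f_supp | exact: h_supp].
- move=> w /split_w [fw hw].
  by rewrite -(cat_take_drop d w) size_cat (f_deg _ fw) (h_deg _ hw).
Qed.

Lemma An_mono (s : seq nat) : An (size s) (mono K s).
Proof.
split; first by exists [:: s] => w; rewrite /mono; case: (w =P s) => [->|]; rewrite ?inE ?eqxx.
by move=> w; rewrite /mono; case: (w =P s) => [->|] //; rewrite eqxx.
Qed.

Lemma A1_mono (s : seq nat) : A1 (mono K s).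
Proof. by case: (An_mono s). Qed.

Lemma An_scale d c (f : elt K) : An d f -> An d (scaleA c f).
Proof.
move=> [[L f_supp] f_deg]; split; first exists L.
all: by move=> w; rewrite /scaleA mulf_eq0 negb_or => /andP [_ ?]; auto.
Qed.

Lemma An_add d (f g : elt K) : An d f -> An d g -> An d (addA f g).
Proof.
move=> [[L f_supp] f_deg] [[L' g_supp] g_deg]; split.
- exists (L ++ L') => w; rewrite /Defs.addA mem_cat.
  by case: (eqVneq (f w) 0) => [->|/f_supp ->//]; rewrite add0r => /g_supp ->; rewrite orbT.
- move=> w; rewrite /Defs.addA.
  by case: (eqVneq (f w) 0) => [->|/f_deg //]; rewrite add0r; exact: g_deg.
Qed.

Lemma Zj_An j (z : elt K) : Zj j z -> An (Nj j) z.
Proof.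
case=> [[c [s [-> [sz_s _]]]] | [c [s1 [s2 [-> [sz_s1 [sz_s2 _]]]]]]].
- by apply: An_scale; rewrite -sz_s; apply: An_mono.
- by apply/An_scale/An_add; [rewrite -sz_s1 | rewrite -sz_s2]; apply: An_mono.
Qed.

Lemma mulA3_homl d N (u z v : elt K) w : An d u -> An N z ->
  mulA (mulA u z) v w = if (d + N <= size w)%N then
     u (take d w) * z (take N (drop d w)) * v (drop (d + N) w) else 0.
Proof.
move=> u_hom z_hom; rewrite (mulA_homl _ _ (An_mulA u_hom z_hom)); case: ifP => // le_w.
rewrite (mulA_homl _ _ u_hom) size_takel // leq_addr take_takel ?leq_addr //.
by rewrite take_drop addnC.
Qed.

Lemma mulA3_cat d N (u z v : elt K) X Y : An d u -> An N z -> (d + N <= size X)%N ->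
  mulA (mulA u z) v (X ++ Y) =
  u (take d X) * z (take N (drop d X)) * v (drop (d + N) X ++ Y).
Proof.
move=> u_hom z_hom fits; have le_dX : (d <= size X)%N by lia.
have dropl n : (n <= size X)%N -> drop n (X ++ Y) = drop n X ++ Y.
  by move=> le_n; rewrite -{1}(cat_take_drop n X) -catA drop_size_cat // size_takel.
rewrite (mulA3_homl _ _ u_hom z_hom) size_cat (leq_trans fits (leq_addr _ _)).
by rewrite takel_cat // !dropl // takel_cat // size_drop; lia.
Qed.

Lemma eval_bigA (I : Type) (r : seq I) (P : pred I) (F : I -> elt K) w :
  (\big[addA/zeroA K]_(i <- r | P i) F i) w = \sum_(i <- r | P i) F i w.
Proof. by apply: (big_rec2 (fun (f : elt K) x => f w = x)) => // i f x _ <-. Qed.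

Section Subspace.
Variable k : nat.

Lemma Bsum_eq (f g : elt K) : Bsum k f -> (forall w, f w = g w) -> Bsum k g.
Proof. by move=> Bf /elt_ext <-. Qed.

Lemma Bsum0 : Bsum k (zeroA K).
Proof.
exists (fun _ => zeroA K); split; first by move=> j _; apply: span0.
by apply: elt_ext => w; rewrite eval_bigA big1.
Qed.

Lemma Bsum_add (f g : elt K) : Bsum k f -> Bsum k g -> Bsum k (addA f g).
Proof.
move=> [b [Bb ->]] [b' [Bb' ->]]; exists (fun j => addA (b j) (b' j)); split.
  by move=> j jk; apply: span_add; [exact: Bb | exact: Bb'].
by apply: elt_ext => w; rewrite /Defs.addA !eval_bigA -big_split.
Qed.

Lemma Bsum_scale c (f : elt K) : Bsum k f -> Bsum k (scaleA c f).
Proof.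
move=> [b [Bb ->]]; exists (fun j => scaleA c (b j)); split.
  by move=> j jk; apply/span_scale/Bb.
by apply: elt_ext => w; rewrite /scaleA !eval_bigA mulr_sumr.
Qed.

Lemma Bsum_sum (I : Type) (r : seq I) (P : pred I) (F : I -> elt K) :
  (forall i, P i -> Bsum k (F i)) -> Bsum k (fun w => \sum_(i <- r | P i) F i w).
Proof.
move=> BF; apply: (@Bsum_eq (\big[addA/zeroA K]_(i <- r | P i) F i)); last exact: eval_bigA.
by apply: (big_ind (Bsum k)); [exact: Bsum0 | exact: Bsum_add |].
Qed.

Lemma Bsum_finsupp (y : elt K) : finsupp y ->
  (forall v, y v != 0 -> Bsum k (mono K v)) -> Bsum k y.
Proof.
move=> [L y_supp] B_mono; set U := undup L.
apply: (Bsum_eq (@Bsum_sum _ U xpredT (fun v => scaleA (y v) (mono K v)) _)).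
  move=> v _; case: (eqVneq (y v) 0) => [yv0 | yv].
  - by apply: (Bsum_eq Bsum0) => T; rewrite /scaleA yv0 mul0r.
  - exact/Bsum_scale/B_mono.
move=> T; rewrite /scaleA /mono; case: (boolP (T \in U)) => [TU | TnU].
- rewrite (bigD1_seq T) ?undup_uniq //= eqxx mulr1 big1 ?addr0 // => v neq_vT.
  by rewrite eq_sym (negbTE neq_vT) mulr0.
- rewrite big_seq_cond big1 => [|v /andP [vU _]].
  + by case: (eqVneq (y T) 0) => // /y_supp; rewrite -mem_undup (negbTE TnU).
  + by rewrite (_ : (T == v) = false) ?mulr0 //; apply: contraNF TnU => /eqP ->.
Qed.

Lemma Bj_Bsum j (f : elt K) : (1 <= j <= k)%N -> Bj j f -> Bsum k f.
Proof.
move=> jk Bf; exists (fun j' => if j' == j then f else zeroA K); split.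
  by move=> j' _; case: eqP => [->|_] //; apply: span0.
apply: elt_ext => w; rewrite eval_bigA (bigD1_seq j) ?iota_uniq ?mem_index_iota //=.
by rewrite eqxx big1 ?addr0 // => i /negbTE ->.
Qed.

(* Every element of B_j has zero constant term, since generators of B_j
   are sums of words of length at least 100^{j^2} - 1 > 0. *)
Lemma Bsum_const0 (f : elt K) : Bsum k f -> f [::] = 0.
Proof.
move=> [b [Bb ->]]; rewrite eval_bigA big_seq_cond big1 // => j /andP [jk _].
rewrite mem_index_iota ltnS in jk; have /andP [j_gt0 _] := jk.
elim: (Bb j jk) => //= [g [m [u [z [v [u_hom [Zz [_ ->]]]]]]] | f1 g1 _ E1 _ E2 | c f1 _ E1].
- rewrite (mulA3_homl _ _ u_hom (Zj_An Zz)) /=; case: ifP => // le_0.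
  by move: (Nj_gt0 j_gt0); rewrite lt0n; move: le_0; rewrite leqn0 addn_eq0 => /andP [_ ->].
- by rewrite /Defs.addA E1 E2 addr0.
- by rewrite /scaleA E1 mulr0.
Qed.

End Subspace.

(* The signed sum over H of an expression invariant under a transposition
   lying in H vanishes: left multiplication by it pairs the even and odd
   elements of H. *)
Lemma signed_sum_tperm_invariant k L (s0 : seq nat) (a b : 'I_L) (F : seq nat -> K) :
  a != b -> label k a = label k b ->
  (forall t, size t = L -> F (permute t (tperm a b)) = F t) ->
  \sum_(s : 'S_L | preserves_labels k s) sgn K s * F (permute s0 s) = 0.
Proof.
move=> neq_ab lab_ab F_inv; have H_ab := preserves_labels_tperm lab_ab.
rewrite (bigID (fun s : 'S_L => odd_perm s)) /= [X in _ + X](reindex_inj (mulgI (tperm a b))) /=.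
rewrite [X in _ + X](eq_big (fun s => preserves_labels k s && odd_perm s)
                           (fun s => - (sgn K s * F (permute s0 s)))); first by rewrite sumrN subrr.
- move=> s; rewrite odd_permM odd_tperm neq_ab /= negbK; congr (_ && _).
  apply/idP/idP => [H_abs | H_s]; last exact: preserves_labelsM.
  by have := preserves_labelsM H_ab H_abs; rewrite mulgA tperm2 mul1g.
- by move=> s _; rewrite sgnM sgn_tperm // -permuteM F_inv ?size_permute // mulN1r mulNr.
Qed.

Lemma Bj_sandwich j m (u r : seq nat) (z : elt K) :
  size u = (m * blk j)%N -> Zj j z -> Bj j (mulA (mulA (mono K u) z) (mono K r)).
Proof.
move=> sz_u Zz; apply: span_gen; exists m, (mono K u), z, (mono K r).
by split; [rewrite -sz_u; apply: An_mono | split; [|split; [apply: A1_mono|]]].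
Qed.

Lemma mono_sandwich (u s r : seq nat) :
  mulA (mulA (mono K u) (scaleA 1 (mono K s))) (mono K r) = mono K (u ++ s ++ r).
Proof.
apply: elt_ext => w; rewrite (mulA3_homl _ _ (An_mono u) (An_scale 1 (An_mono s))).
case: ifP => [_ | short].
- rewrite /mono /scaleA eq_cat3.
  by case: eqP; case: eqP; case: eqP; rewrite /= ?mul1r ?mulr1 ?mul0r ?mulr0.
- by rewrite /mono; case: eqP => // wE; move: short; rewrite wE !size_cat addnA leq_addr.
Qed.

Lemma mono_sandwich2 (u s1 s2 r : seq nat) : size s1 = size s2 ->
  mulA (mulA (mono K u) (scaleA 1 (addA (mono K s1) (mono K s2)))) (mono K r) =
  addA (mono K (u ++ s1 ++ r)) (mono K (u ++ s2 ++ r)).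
Proof.
move=> sz_s; apply: elt_ext => w.
have z_hom : An (size s1) (scaleA 1 (addA (mono K s1) (mono K s2))).
  by apply/An_scale/An_add; [|rewrite sz_s]; apply: An_mono.
rewrite (mulA3_homl _ _ (An_mono u) z_hom); case: ifP => [_ | short].
- rewrite /mono /scaleA /Defs.addA !eq_cat3 -sz_s.
  by case: eqP; case: eqP; case: eqP; case: eqP;
     rewrite /= ?mul1r ?mulr1 ?mul0r ?mulr0 ?addr0 ?add0r.
- have long (s : seq nat) : size s = size s1 -> w != u ++ s ++ r.
    by move=> sz; apply: contraFN short => /eqP ->; rewrite !size_cat sz addnA leq_addr.
  by rewrite /mono /Defs.addA (negbTE (long _ erefl)) (negbTE (long _ (esym sz_s))) addr0.
Qed.

Lemma pos_spot (s : seq nat) j p : pos s (Pj j p) = nth 0 s (spot j p).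
Proof. by []. Qed.

Lemma spot_neq j p q : (p < q)%N -> spot j p != spot j q.
Proof. by move=> lt_pq; apply/eqP => /spot_inj pq; move: lt_pq; rewrite pq ltnn. Qed.

Lemma Zj_repeat j p q (s : seq nat) : (p < q <= j)%N -> size s = Nj j ->
  nth 0 s (spot j p) = nth 0 s (spot j q) -> Zj j (scaleA 1 (mono K s)).
Proof.
by move=> lt_pqj sz_s s_pq; left; exists 1, s; do 2 split => //; exists p, q; rewrite !pos_spot.
Qed.

Lemma Zj_swap j p q (s : seq nat) (a0 b0 : 'I_(Nj j)) :
  (p < q <= j)%N -> val a0 = spot j p -> val b0 = spot j q -> size s = Nj j ->
  (nth 0 s b0 < nth 0 s a0)%N ->
  Zj j (scaleA 1 (addA (mono K s) (mono K (permute s (tperm a0 b0))))).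
Proof.
move=> lt_pqj a0E b0E sz_s lt_ba; right.
have neq_ab : val a0 != val b0 by rewrite a0E b0E spot_neq //; case/andP: lt_pqj.
exists 1, s, (permute s (tperm a0 b0)); do 2 split => //; split; first by rewrite size_permute.
exists p, q, (nth 0 s a0), (nth 0 s b0); do 2 split => //.
rewrite !pos_spot -a0E -b0E !nth_permute_tperm ?ltn_ord // eqxx eq_sym (negbTE neq_ab) eqxx.
do 4 split => //.
move=> r /andP [r_gt0 le_rN] neq_rp neq_rq.
have neq_r (p' : nat) : r <> Pj j p' -> r.-1 != spot j p'.
  by move=> neq; apply/eqP => /(congr1 succn); rewrite !prednK ?Pj_gt0.
rewrite /pos nth_permute_tperm; last by rewrite prednK // ltnS (leq_trans le_rN) //.
by rewrite a0E b0E (negbTE (neq_r _ neq_rp)) (negbTE (neq_r _ neq_rq)).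
Qed.

Lemma Zj_tperm_invariant j (z : elt K) : (0 < j)%N -> Zj j z ->
  exists (a0 b0 : 'I_(Nj j)) p q, [/\ (p < q <= j)%N, val a0 = spot j p,
    val b0 = spot j q & forall w, size w = Nj j -> z (permute w (tperm a0 b0)) = z w].
Proof.
move=> j_gt0 Zz.
have spots p q : (p < q <= j)%N ->
    exists (a0 b0 : 'I_(Nj j)), val a0 = spot j p /\ val b0 = spot j q.
  move=> /andP [lt_pq le_qj]; have le_pj := ltnW (leq_trans lt_pq le_qj).
  by exists (Ordinal (spot_lt j_gt0 le_pj)), (Ordinal (spot_lt j_gt0 le_qj)).
have mono_swap (s s' w : seq nat) (a0 b0 : 'I_(Nj j)) :
    size w = Nj j -> s' = permute s (tperm a0 b0) -> size s = Nj j ->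
    (permute w (tperm a0 b0) == s') = (w == s).
  move=> sz_w -> sz_s; apply/eqP/eqP => [E | ->] //.
  by rewrite -(permute_tpermK a0 b0 sz_w) E permute_tpermK.
case: Zz => [[c [s [-> [sz_s [p [q [lt_pqj s_pq]]]]]]] |
  [c [s1 [s2 [-> [sz_s1 [sz_s2 [p [q [l1 [l2 [lt_pqj [_ [s1p [s1q [s2p [s2q s12]]]]]]]]]]]]]]]]].
- have [a0 [b0 [a0E b0E]]] := spots p q lt_pqj.
  have s_fix : permute s (tperm a0 b0) = s by apply: permute_tperm_id; rewrite // a0E b0E.
  exists a0, b0, p, q; split => // w sz_w.
  by rewrite /scaleA /mono (mono_swap s s) // s_fix.
- have [a0 [b0 [a0E b0E]]] := spots p q lt_pqj.
  have s2E : s2 = permute s1 (tperm a0 b0).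
    apply: (eq_from_nth (x0 := 0)); rewrite ?size_permute // => i lt_i.
    rewrite nth_permute_tperm -?sz_s2 // a0E b0E.
    case: eqP => [->|neq_p]; first by rewrite -!pos_spot s1q s2p.
    case: eqP => [->|neq_q]; first by rewrite -!pos_spot s1p s2q.
    rewrite sz_s2 in lt_i; have := s12 i.+1; rewrite /pos /= => -> //.
    + by move=> iE; apply: neq_p; rewrite /spot -iE.
    + by move=> iE; apply: neq_q; rewrite /spot -iE.
  exists a0, b0, p, q; split => // w sz_w.
  have s1E : s1 = permute s2 (tperm a0 b0) by rewrite s2E permute_tpermK.
  by rewrite /scaleA /Defs.addA /mono (mono_swap s1 s2) // (mono_swap s2 s1) // addrC.
Qed.

Section Relations.
Variables k l : nat.
Hypothesis blk_dvd_len : (blk k %| l.+1)%N.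

Lemma Bj_window_relations j m p q w (a b : 'I_l) :
  (1 <= j <= k)%N -> size w = l -> (p < q <= j)%N ->
  val a = (m * blk j + spot j p)%N -> val b = (m * blk j + spot j q)%N ->
  (nth 0 w a = nth 0 w b -> Bj j (mono K w)) /\
  Bj j (addA (mono K w) (mono K (permute w (tperm a b)))).
Proof.
move=> /andP [j_gt0 le_jk] sz_w lt_pqj aE bE.
have /andP [lt_pq le_qj] := lt_pqj; have le_pj := ltnW (leq_trans lt_pq le_qj).
set d := (m * blk j)%N in aE bE.
have fits : (d + Nj j <= l)%N.
  apply: (block_fits (blk_gt0 j) (dvdn_trans (blk_dvd le_jk) blk_dvd_len)).
  by have := ltn_ord a; rewrite aE; lia.
set a0 : 'I_(Nj j) := Ordinal (spot_lt j_gt0 le_pj).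
set b0 : 'I_(Nj j) := Ordinal (spot_lt j_gt0 le_qj).
have [w_u w_r w_win] :=
  permute_tperm_window fits sz_w (aE : val a = d + a0) (bE : val b = d + b0).
set u := take d w; set win := take (Nj j) (drop d w); set r := drop (d + Nj j) w.
have sz_u : size u = d by rewrite size_takel // sz_w; lia.
have sz_win : size win = Nj j by rewrite size_takel // size_drop sz_w; lia.
have wE : w = u ++ win ++ r := cat_window w d (Nj j).
have wtE : permute w (tperm a b) = u ++ permute win (tperm a0 b0) ++ r.
  by rewrite {1}(cat_window (permute w (tperm a b)) d (Nj j)) w_u w_r w_win.
have win_a : nth 0 win a0 = nth 0 w a by rewrite nth_take ?ltn_ord // nth_drop aE.
have win_b : nth 0 win b0 = nth 0 w b by rewrite nth_take ?ltn_ord // nth_drop bE.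
have swap_rel s : size s = Nj j -> (nth 0 s b0 < nth 0 s a0)%N ->
    Bj j (addA (mono K (u ++ s ++ r)) (mono K (u ++ permute s (tperm a0 b0) ++ r))).
  move=> sz_s lt_s; rewrite -mono_sandwich2 ?size_permute //.
  by apply: (Bj_sandwich _ sz_u); apply: (Zj_swap lt_pqj).
have repeat_rel : nth 0 w a = nth 0 w b -> Bj j (mono K w).
  move=> w_ab; rewrite wE -mono_sandwich; apply: (Bj_sandwich _ sz_u).
  apply: (Zj_repeat lt_pqj sz_win).
  by rewrite -[spot j p]/(val a0) -[spot j q]/(val b0) win_a win_b.
split => //; case: (ltngtP (nth 0 w a) (nth 0 w b)) => [lt_ab | lt_ba | eq_ab].
- set win' := permute win (tperm a0 b0).
  have lt_s : (nth 0 win' b0 < nth 0 win' a0)%N.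
    by rewrite !nth_permute tpermL tpermR win_a win_b.
  have := swap_rel _ (size_permute _ _) lt_s.
  by rewrite permute_tpermK // -wE -wtE addAC.
- by rewrite wtE {1}wE; apply: swap_rel; rewrite ?win_a ?win_b.
- by rewrite permute_tperm_id //; apply: span_add; apply: repeat_rel.
Qed.

Lemma Bsum_same_label w (a b : 'I_l) : size w = l -> a != b -> label k a = label k b ->
  (nth 0 w a = nth 0 w b -> Bsum k (mono K w)) /\
  Bsum k (addA (mono K w) (mono K (permute w (tperm a b)))).
Proof.
move=> sz_w neq_ab lab_ab.
have [j [m [p [q [jk /andP [le_pj le_qj] neq_pq aE bE]]]]] := label_eq lab_ab neq_ab.
case: (ltngtP p q) => [lt_pq | lt_qp | eq_pq]; last by rewrite eq_pq eqxx in neq_pq.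
- have lt_pqj : (p < q <= j)%N by rewrite lt_pq.
  have [rep swap] := Bj_window_relations jk sz_w lt_pqj aE bE.
  by split; [move=> /rep /(Bj_Bsum jk) | exact: Bj_Bsum jk swap].
- have lt_qpj : (q < p <= j)%N by rewrite lt_qp.
  have [rep swap] := Bj_window_relations jk sz_w lt_qpj bE aE.
  by split; [move=> /esym /rep /(Bj_Bsum jk) | rewrite tpermC; exact: Bj_Bsum jk swap].
Qed.

(* Consequently w.s = sgn(s) w modulo B_1 + ... + B_k for every s in H:
   induction on the number of points moved by s, peeling off the
   transposition (i, s i), which lies in H. *)
Lemma Bsum_permute_sign (s : 'S_l) w : preserves_labels k s -> size w = l ->
  Bsum k (fun T => mono K (permute w s) T - sgn K s * mono K w T).
Proof.
move: {2}_.+1 (ltnSn #|[pred i | s i != i]|) => n.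
elim: n s w => [|n IH] s w; first by rewrite ltn0.
move=> lt_n H_s sz_w; case: (pickP [pred i | s i != i]) => [i moved | fixed]; last first.
  have -> : s = 1%g by apply/permP => i; rewrite perm1; apply/eqP/negbFE/fixed.
  by apply: (Bsum_eq (Bsum0 k)) => T; rewrite permute1 // /sgn odd_perm1 mul1r subrr.
set t := tperm i (s i); set s' := (s * t)%g.
have lab_i : label k (s i) = label k i by move/preserves_labelsP: H_s.
have neq_i : i != s i by rewrite eq_sym.
have H_s' : preserves_labels k s' by apply/(preserves_labelsM H_s)/preserves_labels_tperm.
have fewer : (#|[pred x | s' x != x]| < n)%N.
  rewrite ltnS in lt_n; apply: leq_trans lt_n; apply: proper_card; apply/properP; split.
  - apply/subsetP => x; rewrite !inE; apply: contraNN => /eqP sx.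
    rewrite /s' permM sx tpermD //; apply/eqP => E.
    + by move: moved; rewrite /= E sx eqxx.
    + by move: moved; rewrite /= (perm_inj (etrans E (esym sx))) sx eqxx.
  - by exists i; rewrite // inE /s' permM tpermR eqxx.
have sE : s = (s' * t)%g by rewrite /s' -mulgA tperm2 mulg1.
have sgn_s : sgn K s = - sgn K s' by rewrite sE sgnM sgn_tperm // mulrN1.
have [_ swap] := Bsum_same_label sz_w neq_i (esym lab_i).
have IH_s' := IH s' (permute w t) fewer H_s' (size_permute _ _).
apply: (Bsum_eq (Bsum_add IH_s' (Bsum_scale (sgn K s') swap))) => T.
by rewrite /scaleA /Defs.addA permuteM -sE sgn_s; ring.
Qed.

Definition phi (s : seq nat) (x : elt K) : K :=
  \sum_(σ : 'S_l | preserves_labels k σ) sgn K σ * x (permute s σ).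

Definition has_repeat (v : seq nat) : bool :=
  [exists a : 'I_l, exists b : 'I_l,
     [&& a != b, label k a == label k b & nth 0 v a == nth 0 v b]].

Lemma has_repeat_permute w (σ : 'S_l) :
  has_repeat w -> preserves_labels k σ -> has_repeat (permute w σ).
Proof.
move=> /existsP [a /existsP [b /and3P [neq_ab /eqP lab_ab /eqP w_ab]]] H_σ.
have /preserves_labelsP H_σV := preserves_labelsV H_σ.
apply/existsP; exists ((σ^-1)%g a); apply/existsP; exists ((σ^-1)%g b).
by rewrite (inj_eq perm_inj) neq_ab !nth_permute !permKV !H_σV lab_ab w_ab !eqxx.
Qed.

Lemma permute_inj w (σ τ : 'S_l) : ~~ has_repeat w ->
  preserves_labels k σ -> preserves_labels k τ -> permute w σ = permute w τ -> σ = τ.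
Proof.
move=> norep /preserves_labelsP H_σ /preserves_labelsP H_τ στ; apply/permP => i.
have := congr1 (fun v => nth 0 v i) στ; rewrite /= !nth_permute => w_στ.
apply/eqP; apply: contraNT norep => neq_στ.
apply/existsP; exists (σ i); apply/existsP; exists (τ i).
by rewrite neq_στ H_σ H_τ w_στ !eqxx.
Qed.

Lemma Bsum_repeats (y : elt K) : finsupp y ->
  (forall v, y v != 0 -> size v = l /\ has_repeat v) -> Bsum k y.
Proof.
move=> y_fin rep; apply: Bsum_finsupp => // v /rep [sz_v].
move=> /existsP [a /existsP [b /and3P [neq_ab /eqP lab_ab /eqP v_ab]]].
by have [v_rep _] := Bsum_same_label sz_v neq_ab lab_ab; exact: v_rep.
Qed.

Definition in_orbit w v : bool :=
  [exists σ : 'S_l, preserves_labels k σ && (v == permute w σ)].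

Definition on_orbit w (x : elt K) : elt K := fun v => if in_orbit w v then x v else 0.
Definition off_orbit w (x : elt K) : elt K := fun v => if in_orbit w v then 0 else x v.

Lemma in_orbit_permute w v (σ : 'S_l) : size v = l -> preserves_labels k σ ->
  in_orbit w (permute v σ) = in_orbit w v.
Proof.
move=> sz_v H_σ.
apply/existsP/existsP => [[ρ /andP [H_ρ /eqP vσE]] | [ρ /andP [H_ρ /eqP ->]]].
- exists (σ^-1 * ρ)%g; rewrite preserves_labelsM ?preserves_labelsV //=.
  by rewrite -permuteM -vσE permuteM mulVg permute1.
- by exists (σ * ρ)%g; rewrite preserves_labelsM // permuteM eqxx.
Qed.

(* If phi_w(x) = 0, the part of x on the orbit of w lies in B: either w has
   a repeat and so has every word of its orbit, or the orbit part is
   sum_σ x(wσ) (wσ - sgn(σ) w) + phi_w(x) w. *)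
Lemma Bsum_on_orbit w (x : elt K) : An l x -> size w = l -> phi w x = 0 ->
  Bsum k (on_orbit w x).
Proof.
move=> [[L x_supp] x_deg] sz_w phi0; rewrite /on_orbit.
case: (boolP (has_repeat w)) => [rep | norep].
  apply: Bsum_repeats => [|v].
    by exists L => v; case: (in_orbit w v); [exact: x_supp | rewrite eqxx].
  case: (boolP (in_orbit w v)) => [/existsP [σ /andP [H_σ /eqP ->]] _ | _]; last by rewrite eqxx.
  by rewrite size_permute has_repeat_permute.
have orbit_sum T : (if in_orbit w T then x T else 0) =
    \sum_(σ : 'S_l | preserves_labels k σ) x (permute w σ) * mono K (permute w σ) T.
  rewrite /mono; case: (boolP (in_orbit w T)) => [/existsP [ρ /andP [H_ρ /eqP TE]] | T_out].
  - rewrite (bigD1 ρ) //= -TE eqxx mulr1 big1 ?addr0 // => σ /andP [H_σ neq_σρ].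
    case: eqP => [στ|]; last by rewrite mulr0.
    by case/eqP: neq_σρ; apply: (permute_inj norep H_σ H_ρ); rewrite -στ TE.
  - rewrite big1 // => σ H_σ; case: eqP => [TE|]; last by rewrite mulr0.
    by case/negP: T_out; apply/existsP; exists σ; rewrite H_σ TE eqxx.
have B_terms : Bsum k (fun T => \sum_(σ : 'S_l | preserves_labels k σ)
    scaleA (x (permute w σ)) (fun T' => mono K (permute w σ) T' - sgn K σ * mono K w T') T).
  by apply: Bsum_sum => σ H_σ; apply/Bsum_scale/Bsum_permute_sign.
apply: (Bsum_eq B_terms) => T; rewrite orbit_sum /scaleA.
transitivity (\sum_(σ : 'S_l | preserves_labels k σ)
                x (permute w σ) * mono K (permute w σ) T - phi w x * mono K w T).
  by rewrite /phi mulr_suml -sumrB; apply: eq_bigr => σ _; ring.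
by rewrite phi0 mul0r subr0.
Qed.

(* Removing an orbit preserves the vanishing of all the phi_s: phi_s only
   sees the orbit of s, which is either the removed orbit or disjoint from it. *)
Lemma phi_off_orbit w (x : elt K) :
  (forall s, size s = l -> phi s x = 0) ->
  forall s, size s = l -> phi s (off_orbit w x) = 0.
Proof.
move=> phi0 s sz_s; rewrite /phi /off_orbit; case: (boolP (in_orbit w s)) => [s_in | s_out].
- by rewrite big1 // => σ H_σ; rewrite in_orbit_permute // s_in mulr0.
- rewrite -[RHS](phi0 s sz_s); apply: eq_bigr => σ H_σ.
  by rewrite in_orbit_permute // (negbTE s_out).
Qed.

(* The functionals phi_s detect B on A(l): induction on the support of x,
   removing one orbit at a time. *)
Lemma Bsum_of_phi0 (x : elt K) : An l x ->
  (forall s, size s = l -> phi s x = 0) -> Bsum k x.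
Proof.
move=> [[L x_supp] x_deg]; elim: L x x_supp x_deg => [|w L IH] x x_supp x_deg phi0.
  by apply: (Bsum_eq (Bsum0 k)) => T; case: (eqVneq (x T) 0) => // /x_supp.
case: (eqVneq (x w) 0) => [xw0 | xw].
  apply: IH => // v xv; move: (x_supp v xv); rewrite inE; case: eqP => // vE _.
  by move: xv; rewrite vE xw0 eqxx.
have sz_w := x_deg w xw.
have w_in : in_orbit w w by apply/existsP; exists 1%g; rewrite preserves_labels1 permute1 ?eqxx.
have x_hom : An l x by split; [exists (w :: L) |].
have off_supp v : off_orbit w x v != 0 -> v \in L.
  rewrite /off_orbit; case: (boolP (in_orbit w v)) => [_ | v_out]; first by rewrite eqxx.
  move=> xv; move: (x_supp v xv); rewrite inE; case: eqP => // vE.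
  by move: v_out; rewrite vE w_in.
have off_deg v : off_orbit w x v != 0 -> size v = l.
  by rewrite /off_orbit; case: (in_orbit w v); [rewrite eqxx | exact: x_deg].
have B_off := IH _ off_supp off_deg (phi_off_orbit w phi0).
apply: (Bsum_eq (Bsum_add (Bsum_on_orbit x_hom sz_w (phi0 w sz_w)) B_off)) => T.
by rewrite /Defs.addA /on_orbit /off_orbit; case: (in_orbit w T); rewrite ?addr0 ?add0r.
Qed.

(* They are linear and
   map B into B (Lam_Bsum), because l + 1 is a multiple of every 100^{j^2},
   j <= k. *)
Definition Lam (s : seq nat) (mu : nat) (y : elt K) : elt K :=
  fun v => \sum_(σ : 'S_l | preserves_labels k σ) sgn K σ * y (permute s σ ++ mu :: v).

Lemma Lam_add s mu (f g : elt K) : Lam s mu (addA f g) = addA (Lam s mu f) (Lam s mu g).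
Proof.
apply: elt_ext => v; rewrite /Lam /Defs.addA -big_split /=.
by apply: eq_bigr => σ _; rewrite mulrDr.
Qed.

Lemma Lam_zero s mu : Lam s mu (zeroA K) = zeroA K.
Proof. by apply: elt_ext => v; rewrite /Lam /zeroA big1 // => σ _; rewrite mulr0. Qed.

Lemma Lam_scale s mu c (f : elt K) : Lam s mu (scaleA c f) = scaleA c (Lam s mu f).
Proof.
apply: elt_ext => v; rewrite /Lam /scaleA mulr_sumr.
by apply: eq_bigr => σ _; rewrite mulrCA.
Qed.

Lemma An_Lam s mu d (u : elt K) : An (l.+1 + d) u -> An d (Lam s mu u).
Proof.
move=> [[L u_supp] u_deg].
have nz v : Lam s mu u v != 0 -> exists σ : 'S_l, u (permute s σ ++ mu :: v) != 0.
  move=> Luv; apply/existsP; apply: contraNT Luv => /existsPn u0.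
  by apply/eqP/big1 => σ _; rewrite (eqP (negbNE (u0 σ))) mulr0.
split.
- exists [seq drop l.+1 w | w <- L] => v /nz [σ uσ]; apply/mapP.
  exists (permute s σ ++ mu :: v); first exact: u_supp.
  by rewrite -cat_rcons drop_size_cat // size_rcons size_permute.
- move=> v /nz [σ /u_deg]; rewrite size_cat size_permute /= -addSnnS.
  by move/eqP; rewrite eqn_add2l => /eqP.
Qed.

Lemma Lam_mulA s mu d (f g : elt K) : An (l.+1 + d) f ->
  Lam s mu (mulA f g) = mulA (Lam s mu f) g.
Proof.
move=> f_hom; apply: elt_ext => v; rewrite /Lam (mulA_homl _ _ (An_Lam s mu f_hom)).
have sz_X (σ : 'S_l) : size (rcons (permute s σ) mu) = l.+1 by rewrite size_rcons size_permute.
under eq_bigr => σ _ do rewrite (mulA_homl _ _ f_hom) -cat_rcons size_cat sz_X leq_add2l.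
case: ifP => _; last by rewrite big1 // => σ _; rewrite mulr0.
rewrite /Lam mulr_suml; apply: eq_bigr => σ _.
by rewrite -(sz_X σ) take_cat_prefix drop_cat_prefix cat_rcons mulrA.
Qed.

(* A generator u z v of B_j whose Z_j-window lies in the first l letters is
   killed by Lambda_{s,mu}: z is invariant under a transposition in H. *)
Lemma Lam_window_generator s mu j m (u z v : elt K) :
  (1 <= j <= k)%N -> An (m * blk j) u -> Zj j z -> (m * blk j + Nj j <= l)%N ->
  Lam s mu (mulA (mulA u z) v) = zeroA K.
Proof.
move=> jk u_hom Zz fits; have /andP [j_gt0 _] := jk.
have [a0 [b0 [p [q [lt_pqj a0E b0E z_inv]]]]] := Zj_tperm_invariant j_gt0 Zz.
have /andP [lt_pq le_qj] := lt_pqj.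
set d := (m * blk j)%N in u_hom fits.
have lt_a : (d + a0 < l)%N by apply: leq_trans fits; rewrite ltn_add2l.
have lt_b : (d + b0 < l)%N by apply: leq_trans fits; rewrite ltn_add2l.
set a : 'I_l := Ordinal lt_a; set b : 'I_l := Ordinal lt_b.
have neq_ab : a != b.
  apply/eqP => /(congr1 val) /= /eqP; rewrite eqn_add2l a0E b0E.
  exact/negP/spot_neq.
have lab_ab : label k a = label k b by rewrite /= a0E b0E !label_spot // ltnW // (leq_trans lt_pq).
apply: elt_ext => y; rewrite /Lam /zeroA.
pose F t := mulA (mulA u z) v (t ++ mu :: y).
apply: (signed_sum_tperm_invariant s neq_ab lab_ab (F := F)).
move=> t sz_t; rewrite /F.
have [t_u t_r t_win] := permute_tperm_window fits sz_t (erefl (val a)) (erefl (val b)).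
rewrite !(mulA3_cat v _ u_hom (Zj_An Zz)) ?size_permute ?sz_t // t_u t_r t_win z_inv //.
by rewrite size_takel // size_drop sz_t leq_subRL // (leq_trans (leq_addr _ _) fits).
Qed.

(* Lambda_{s,mu} maps generators of B_j to B_j: a generator either has its
   Z_j-window inside the first l letters, or its left factor u has degree at
   least l + 1 and Lambda_{s,mu} acts on u alone. *)
Lemma Lam_Bgen s mu j (g : elt K) : (1 <= j <= k)%N -> Bgen j g -> Bj j (Lam s mu g).
Proof.
move=> jk [m [u [z [v [u_hom [Zz [v_1 ->]]]]]]]; have /andP [_ le_jk] := jk.
have dvd_j := dvdn_trans (blk_dvd le_jk) blk_dvd_len.
case: (block_dichotomy m (blk_gt0 j) dvd_j) => [fits | [m' mE]].
  by rewrite (Lam_window_generator s mu v jk u_hom Zz fits); apply: span0.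
have u_hom' : An (l.+1 + m' * blk j) u by rewrite -mE.
have uz_hom : An (l.+1 + (m' * blk j + Nj j)) (mulA u z).
  by rewrite addnA; apply: An_mulA => //; apply: Zj_An.
rewrite (Lam_mulA s mu v uz_hom) (Lam_mulA s mu z u_hom').
by apply: span_gen; exists m', (Lam s mu u), z, v; split; first exact: An_Lam.
Qed.

Lemma Lam_Bsum s mu (y : elt K) : Bsum k y -> Bsum k (Lam s mu y).
Proof.
move=> [b [Bb ->]]; exists (fun j => Lam s mu (b j)); split.
  move=> j jk; elim: (Bb j jk) => [|g Bg|f g _ Bf _ Bg|c f _ Bf].
  - by rewrite Lam_zero; apply: span0.
  - exact: Lam_Bgen.
  - by rewrite Lam_add; apply: span_add.
  - by rewrite Lam_scale; apply: span_scale.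
exact: (big_morph (Lam s mu) (Lam_add s mu) (Lam_zero s mu)).
Qed.

Lemma Lam_left_factor s mu (a Q : elt K) : An l a ->
  Lam s mu (mulA (mulA a (gen K mu)) Q) = scaleA (phi s a) Q.
Proof.
move=> a_hom; have ax_hom : An (l.+1 + 0) (mulA a (gen K mu)).
  by rewrite addn0 -addn1; apply: (An_mulA a_hom (An_mono [:: mu])).
rewrite (Lam_mulA s mu Q ax_hom); apply: elt_ext => v.
rewrite (mulA_homl _ _ (An_Lam s mu ax_hom)) leq0n take0 drop0 /scaleA /Lam /phi !mulr_suml.
apply: eq_bigr => σ _; congr (_ * _ * _).
rewrite (mulA_homl _ _ a_hom) size_cat size_permute leq_addr.
by rewrite take_size_cat ?size_permute // drop_size_cat ?size_permute // /gen /mono eqxx mulr1.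
Qed.

(* The key step: if a in A(l) is not in B, then a x_mu Q in B forces Q in B.
   Since a is not in B, some phi_s(a) is nonzero, and Lambda_{s,mu} maps
   a x_mu Q in B to phi_s(a) Q in B. *)
Lemma Bsum_cancel_left mu (a Q : elt K) : An l a -> ~ Bsum k a ->
  Bsum k (mulA (mulA a (gen K mu)) Q) -> Bsum k Q.
Proof.
move=> a_hom a_notB B_aQ.
have [s phi_s] : exists s, phi s a != 0.
  apply: NNPP => no_s; apply/a_notB/(Bsum_of_phi0 a_hom) => s _.
  by case: (eqVneq (phi s a) 0) => // phi_s; case: no_s; exists s.
have := Bsum_scale (phi s a)^-1 (Lam_Bsum s mu B_aQ).
rewrite Lam_left_factor // => B_Q; apply: (Bsum_eq B_Q) => v.
by rewrite /scaleA mulrA mulVf // mul1r.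
Qed.

End Relations.
End FreeAlgebra.

(* Theorem: peel off the factors a_i x_{m_i} from the left with
   Bsum_cancel_left (the length 100^{k^2} p_i - 1 of a_i is one less than a
   multiple of 100^{k^2}); what remains is 1, which is not in B since
   elements of B have zero constant term. *)
Theorem mainTheorem5 (K : fieldType) (k n : nat) (a : 'I_n -> elt K) :
  (1 <= k)%N -> (1 <= n)%N ->
  (forall i, exists p : nat, (0 < p)%N /\ An (100 ^ (k ^ 2) * p).-1 (a i)) ->
  (forall i, ~ Bsum k (a i)) ->
  forall m : 'I_n -> nat, ~ Bsum k (wordprod a m).
Proof.
move=> _ _ a_hom a_notB m; rewrite /wordprod; elim: (enum 'I_n) => [|i r IH] /=.
  by move/Bsum_const0; rewrite /oneA /mono eqxx => /eqP; rewrite oner_eq0.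
move=> B_prod; apply: IH; have [p [p_gt0 a_i]] := a_hom i.
apply: (Bsum_cancel_left _ a_i (a_notB i) B_prod).
by rewrite prednK ?muln_gt0 ?expn_gt0 // dvdn_mulr.
Qed.
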